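(* Let $\mathbb{K}$ be a field of characteristic $0$, $\mathcal{S}=\mathbb{K}[x_0,\dots,x_n]$, $R=\mathbb{K}[x_1,\dots,x_n]$, $k\le d$, $\omega\in\mathcal{S}_k$ and $\ell=x_0+\xi_1x_1+\dots+\xi_nx_n$ with $\xi\in\mathbb{K}^n$ and $\ell\nmid\omega$. Let $I_\xi:=\{p\in R:p\star(\omega^{d,\ell,\mathbf x}(\mathbf z)\,e_\xi(\mathbf z))=0\}$ and $\mathcal{A}_\xi:=R/I_\xi$. Then $\mathcal{N}(\mathcal{A}_\xi)-1=k=\deg(\omega)$.
   Context: $R^*$ is identified with $\mathbb{K}[[z_1,\dots,z_n]]$ via $\sum_\alpha\varphi_\alpha\mathbf z^\alpha/\alpha!\leftrightarrow(\mathbf x^\alpha\mapsto\varphi_\alpha)$; for $p\in R$, $p\star\varphi$ is the functional $q\mapsto\varphi(pq)$; $e_\xi(\mathbf z)=\exp(\sum_i\xi_iz_i)$. Writing $\omega=\sum_{j=0}^k\omega_j\ell^{k-j}$ with $\omega_j\in\mathbb{K}[x_1,\dots,x_n]_j$, set $\omega^{d,\ell,\mathbf x}:=\frac1{d!}\sum_{j=0}^k(d-j)!\,\omega_j$, read in the variables $z_1,\dots,z_n$. $I_\xi$ is an ideal contained in $\mathfrak m_\xi=(x_1-\xi_1,\dots,x_n-\xi_n)$, so $a(\xi)$ is well defined for $a\in\mathcal{A}_\xi$. The nil-index $\mathcal{N}(\mathcal{A}_\xi)$ is the minimal $N\in\mathbb{N}$ such that $(a-a(\xi))^N=0$ in $\mathcal{A}_\xi$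 for every $a\in\mathcal{A}_\xi$. *)

From HB Require Import structures.
From mathcomp Require Import all_boot all_order all_algebra.
From mathcomp Require Import mpoly.
Set Implicit Arguments. Unset Strict Implicit. Unset Printing Implicit Defensive.
Import Order.TTheory GRing.Theory.
Local Open Scope ring_scope.

Section Defs.
Variables (K : fieldType) (n : nat).

Definition mfact (a : 'X_{1..n}) : nat := \prod_(i < n) (a i)`!.

(* Formal power series in z_1..z_n, given by their ordinary coefficients:
   F = \sum_alpha F alpha * z^alpha. *)
Definition series := 'X_{1..n} -> K.

(* e_xi(z) = exp(sum_i xi_i z_i) = sum_alpha xi^alpha / alpha! z^alpha *)
Definition exp_series (xi : 'I_n -> K) : series :=
  fun a => (\prod_(i < n) xi i ^+ a i) / (mfact a)%:R.

Definition polyser_mul (g : {mpoly K[n]}) (F : series) : series :=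
  fun a => \sum_(m <- msupp g) (if (m <= a)%MM then g@_m * F (a - m)%MM else 0).

(* The identification R^* = K[[z]]:  sum_alpha phi_alpha z^alpha/alpha!  <->
   (x^alpha |-> phi_alpha).  A series with ordinary coefficients F thus
   corresponds to phi_alpha = alpha! * F alpha, extended linearly to R. *)
Definition functional_of_series (F : series) : {mpoly K[n]} -> K :=
  fun q => \sum_(m <- msupp q) q@_m * ((mfact m)%:R * F m).

Definition star (p : {mpoly K[n]}) (phi : {mpoly K[n]} -> K) : {mpoly K[n]} -> K :=
  fun q => phi (p * q).

Definition embedRS (p : {mpoly K[n]}) : {mpoly K[n.+1]} :=
  mmap (@mpolyC n.+1 K) (fun i : 'I_n => 'X_(lift ord0 i)) p.

Definition lin_form (xi : 'I_n -> K) : {mpoly K[n.+1]} :=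
  'X_ord0 + \sum_(i < n) xi i *: 'X_(lift ord0 i).

Definition omega_dlx (d k : nat) (om : nat -> {mpoly K[n]}) : {mpoly K[n]} :=
  ((d`!)%:R)^-1 *: \sum_(j < k.+1) ((d - j)`!)%:R *: om j.

Definition I_xi (d k : nat) (om : nat -> {mpoly K[n]}) (xi : 'I_n -> K)
  (p : {mpoly K[n]}) : Prop :=
  forall q, star p (functional_of_series (polyser_mul (omega_dlx d k om) (exp_series xi))) q = 0.

Definition nil_bound (I : {mpoly K[n]} -> Prop) (xi : 'I_n -> K) (N : nat) : Prop :=
  forall a : {mpoly K[n]}, I ((a - (a.@[xi])%:MP) ^+ N).

(* N is the nil-index of R/I (relative to the point xi): minimal such N *)
Definition is_nil_index (I : {mpoly K[n]} -> Prop) (xi : 'I_n -> K) (N : nat) : Prop :=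
  nil_bound I xi N /\ forall M, nil_bound I xi M -> (N <= M)%N.

End Defs.

From HB Require Import structures.
From mathcomp Require Import all_boot all_order all_algebra.
From mathcomp Require Import mpoly.
From mathcomp Require Import ring.
Import GRing.Theory.
Local Open Scope ring_scope.

(* Under R^* = K[[z]], the functional attached to G(z) e_xi(z) is
   q |-> (G(d/dx) q)(xi), where G = omega^{d,l,x} has degree k and top
   homogeneous part (d-k)!/d! omega_k.  If b(xi) = 0, all derivatives of order
   at most k of b^(k+1) q vanish at xi, so (a - a(xi))^(k+1) lies in I_xi.
   Conversely, for a linear form L_v = sum_i v_i x_i only the top part of G
   sees (L_v - L_v(xi))^k, which yields k! (d-k)!/d! omega_k(v).  As l does not
   divide omega, omega_k <> 0, and a nonzero polynomial over a field of
   characteristic 0 has a non-root (by Kronecker substitution x_i |-> t^(B^i)),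
   so for some v the k-th power of L_v - L_v(xi) is not in I_xi. *)

Definition nat_of_digits (B : nat) (s : seq nat) : nat :=
  foldr (fun x acc => x + B * acc)%N 0%N s.

Lemma nat_of_digitsE B s :
  nat_of_digits B s = (\sum_(i < size s) nth 0%N s i * B ^ i)%N.
Proof.
elim: s => [|x s IH] /=; first by rewrite big_ord0.
rewrite big_ord_recl /= expn0 muln1 IH big_distrr /=; congr (_ + _)%N.
by apply: eq_bigr => i _; rewrite expnS mulnCA.
Qed.

Lemma nat_of_digits_inj B s s' : size s = size s' ->
  all (fun x => x < B)%N s -> all (fun x => x < B)%N s' ->
  nat_of_digits B s = nat_of_digits B s' -> s = s'.
Proof.
elim: s s' => [|x s IH] [|y s'] //= [eq_size] /andP[ltxB ltsB] /andP[ltyB lts'B].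
move=> eq_digits; have eq_xy : x = y.
  have := congr1 (modn^~ B) eq_digits => /=.
  by rewrite ![(_ + B * _)%N]addnC ![(B * _)%N]mulnC !modnMDl !modn_small.
subst y; congr (_ :: _); apply: IH => //.
move/eqP: eq_digits; rewrite eqn_add2l eqn_mul2l => /orP[/eqP B0|/eqP //].
by rewrite B0 in ltxB.
Qed.

Lemma pchar0_natr_inj {R : idomainType} :
  [pchar R] =i pred0 -> injective (fun i : nat => i%:R : R).
Proof.
move=> /pcharf0P natr_eq0 i j /= eq_ij.
wlog le_ij : i j eq_ij / (i <= j)%N.
  by move=> W; case: (leqP i j) => [|/ltnW] /W ->.
have : (j - i)%:R == 0 :> R by rewrite natrB // eq_ij subrr.
by rewrite natr_eq0 subn_eq0 => le_ji; apply/eqP; rewrite eqn_leq le_ij.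
Qed.

Lemma poly_nonroot {R : idomainType} (q : {poly R}) :
  [pchar R] =i pred0 -> q != 0 -> exists t, ~~ root q t.
Proof.
move=> charR0 q_neq0; pose ts := [seq i%:R : R | i <- iota 0 (size q)].
have : ~~ all (root q) ts.
  apply/negP => /(max_poly_roots q_neq0).
  rewrite map_inj_uniq ?iota_uniq; last exact: pchar0_natr_inj.
  by rewrite size_map size_iota ltnn => /(_ isT).
by case/allPn => t _; exists t.
Qed.

Section KroneckerSubstitution.
Variables (R : idomainType) (n : nat) (p : {mpoly R[n]}).

Local Notation B := (msize p).

Definition kronecker_exp (m : 'X_{1..n}) : nat := nat_of_digits B m.

Lemma kronecker_exp_inj : {in msupp p &, injective kronecker_exp}.
Proof.
have digits_lt m : m \in msupp p -> all (fun x => x < B)%N m.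
  move=> mp; apply/allP => x /tnthP[i ->]; apply: leq_ltn_trans (msize_mdeg_lt mp).
  by rewrite mdegE (bigD1 i) //= leq_addr.
move=> m m' mp m'p eq_exp; do 2 apply: val_inj.
by apply: nat_of_digits_inj (digits_lt _ mp) (digits_lt _ m'p) eq_exp; rewrite !size_tuple.
Qed.

Lemma prod_kronecker (t : R) (m : 'X_{1..n}) :
  \prod_(i < n) (t ^+ (B ^ i)) ^+ m i = t ^+ kronecker_exp m.
Proof.
rewrite (eq_bigr (fun i => t ^+ (m i * B ^ i))) => [|i _]; last by rewrite -exprM mulnC.
rewrite -(big_morph (fun e => t ^+ e) (exprD t) (expr0 t)).
rewrite /kronecker_exp nat_of_digitsE size_tuple; congr (_ ^+ _).
by apply: eq_bigr => i _; rewrite /fun_of_multinom (tnth_nth 0%N).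
Qed.

Definition kronecker_poly : {poly R} :=
  \sum_(m <- msupp p) p@_m *: 'X^(kronecker_exp m).

Lemma horner_kronecker_poly t :
  kronecker_poly.[t] = p.@[fun i => t ^+ (B ^ i)].
Proof.
rewrite horner_sum mevalE; apply: eq_bigr => m _.
by rewrite hornerZ hornerXn prod_kronecker.
Qed.

Lemma kronecker_poly_neq0 : p != 0 -> kronecker_poly != 0.
Proof.
rewrite -msupp_eq0; case E: (msupp p) => [//|m0 s] _.
have m0p : m0 \in msupp p by rewrite E mem_head.
apply/eqP => /(congr1 (fun q : {poly R} => q`_(kronecker_exp m0))).
rewrite coef_sumMXn coef0 -big_filter (bigD1_seq m0) /=; first last.
- by rewrite filter_uniq ?msupp_uniq.
- by rewrite mem_filter eqxx m0p.
rewrite big1_seq ?addr0 => [/eqP|m /andP[m_neq_m0]]; first by rewrite mcoeff_eq0 m0p.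
rewrite mem_filter => /andP[/eqP eq_exp mp].
by rewrite (kronecker_exp_inj _ _ mp m0p eq_exp) eqxx in m_neq_m0.
Qed.

End KroneckerSubstitution.

Lemma mpoly_nonroot {R : idomainType} {n : nat} (p : {mpoly R[n]}) :
  [pchar R] =i pred0 -> p != 0 -> exists v : 'I_n -> R, p.@[v] != 0.
Proof.
move=> charR0 /kronecker_poly_neq0 /(poly_nonroot _ charR0) [t].
by rewrite /root horner_kronecker_poly; exists (fun i => t ^+ (msize p ^ i)).
Qed.

Section PartialDerivatives.
Variables (R : comNzRingType) (n : nat).
Implicit Types (b r : {mpoly R[n]}) (xi : 'I_n -> R).

Definition mderiv_seq (mu : 'X_{1..n}) : seq 'I_n :=
  flatten [seq nseq (mu i) i | i <- enum 'I_n].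

Lemma mderivm_seqE mu b : b^`M[mu] = foldr (@mderiv n R) b (mderiv_seq mu).
Proof. exact: mderivm_foldr. Qed.

Lemma size_mderiv_seq mu : size (mderiv_seq mu) = mdeg mu.
Proof.
rewrite size_flatten /shape -map_comp sumnE big_map big_enum mdegE /=.
by apply: eq_bigr => i _; rewrite size_nseq.
Qed.

Lemma prod_mderiv_seq (c : 'I_n -> R) mu :
  \prod_(i <- mderiv_seq mu) c i = \prod_(i < n) c i ^+ mu i.
Proof.
rewrite big_flatten big_map big_enum; apply: eq_bigr => i _ /=.
rewrite big_nseq; elim: (mu i) => [|e IH] /=; first by rewrite expr0.
by rewrite IH exprS.
Qed.

Lemma mderiv_exprS b i e :
  (b ^+ e.+1)^`M(i) = e.+1%:R * b ^+ e * b^`M(i).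
Proof.
elim: e => [|e IH]; first by rewrite mul1r expr1 expr0 mul1r.
by rewrite exprS mderivM IH [in RHS]mulrS exprS; ring.
Qed.

Lemma mderiv_exprSM b r i e :
  exists r', (b ^+ e.+1 * r)^`M(i) = b ^+ e * r'.
Proof.
exists (e.+1%:R * b^`M(i) * r + b * r^`M(i)).
by rewrite mderivM mderiv_exprS exprS; ring.
Qed.

Lemma mderiv_seq_exprM b r s j : (size s <= j)%N ->
  exists r', foldr (@mderiv n R) (b ^+ j * r) s = b ^+ (j - size s) * r'.
Proof.
elim: s => [|i s IH] /= le_sj; first by exists r; rewrite subn0.
have [r' ->] := IH (ltnW le_sj); rewrite -subnSK //; exact: mderiv_exprSM.
Qed.

Lemma mderivm_exprM_eval0 b r xi mu j : b.@[xi] = 0 -> (mdeg mu < j)%N ->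
  ((b ^+ j * r)^`M[mu]).@[xi] = 0.
Proof.
move=> b_xi lt_mu_j; rewrite mderivm_seqE.
have [|r' ->] := mderiv_seq_exprM b r (mderiv_seq mu) j.
  by rewrite size_mderiv_seq ltnW.
by rewrite mevalM rmorphXn /= b_xi size_mderiv_seq expr0n subn_eq0 leqNgt lt_mu_j mul0r.
Qed.

Section ConstantGradient.
Variables (b : {mpoly R[n]}) (c : 'I_n -> R).
Hypothesis mderiv_b : forall i, b^`M(i) = (c i)%:MP.

Lemma mderiv_exprS_const i e : (b ^+ e.+1)^`M(i) = (e.+1%:R * c i) *: b ^+ e.
Proof.
rewrite mderiv_exprS mderiv_b mulrC mul_mpolyC mulr_natl -scaler_nat scalerA.
by rewrite mulrC.
Qed.

Lemma mderiv_seq_expr j s : (size s <= j)%N ->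
  foldr (@mderiv n R) (b ^+ j) s
  = ((j ^_ (size s))%:R * \prod_(i <- s) c i) *: b ^+ (j - size s).
Proof.
elim: s => [|i s IH] /= le_sj; first by rewrite big_nil ffactn0 mulr1 scale1r subn0.
have Ej : (j - size s = (j - (size s).+1).+1)%N by rewrite subnSK.
rewrite IH ?(ltnW le_sj) // mderivZ Ej mderiv_exprS_const scalerA -Ej.
by rewrite big_cons ffactnSr natrM; congr (_ *: _); ring.
Qed.

Lemma mderivm_expr_eval0 xi mu j : b.@[xi] = 0 -> (mdeg mu <= j)%N ->
  ((b ^+ j)^`M[mu]).@[xi]
  = if mdeg mu == j then j`!%:R * \prod_(i < n) c i ^+ mu i else 0.
Proof.
move=> b_xi le_mu_j; rewrite mderivm_seqE mderiv_seq_expr ?size_mderiv_seq //.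
rewrite mevalZ rmorphXn /= b_xi expr0n prod_mderiv_seq subn_eq0.
case: eqP => [->|/eqP ne_mu_j]; first by rewrite leqnn ffactnn mulr1.
by rewrite leqNgt ltn_neqAle ne_mu_j le_mu_j mulr0.
Qed.

End ConstantGradient.

Definition linform (v : 'I_n -> R) : {mpoly R[n]} := \sum_(i < n) v i *: 'X_i.

Lemma mderiv_linform v i : (linform v)^`M(i) = (v i)%:MP.
Proof.
rewrite raddf_sum (bigD1 i) //= big1 => [|j ne_ji]; last first.
  by rewrite mderivZ mderivX mnm1E (negbTE ne_ji) scale0r scaler0.
rewrite mderivZ mderivX mnm1E eqxx addr0 scale1r -mul_mpolyC.
have -> : (U_(i) - U_(i) = 0)%MM by rewrite -{1}[U_(i)%MM]add0m addmK.
by rewrite mpolyX0 mulr1.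
Qed.

Lemma meval_sub_meval (a : {mpoly R[n]}) xi : (a - (a.@[xi])%:MP).@[xi] = 0.
Proof. by rewrite mevalB mevalC subrr. Qed.

Definition diffop_at (G : {mpoly R[n]}) xi (q : {mpoly R[n]}) : R :=
  \sum_(mu <- msupp G) G@_mu * (q^`M[mu]).@[xi].

Lemma diffop_at_exprM_eval0 G xi b r k : (msize G <= k.+1)%N -> b.@[xi] = 0 ->
  diffop_at G xi (b ^+ k.+1 * r) = 0.
Proof.
move=> le_G_k b_xi; rewrite /diffop_at big_seq big1 // => mu muG.
by rewrite mderivm_exprM_eval0 ?mulr0 // (leq_trans (msize_mdeg_lt muG)).
Qed.

Lemma diffop_at_linform_expr G xi v k : (msize G <= k.+1)%N ->
  diffop_at G xi ((linform v - ((linform v).@[xi])%:MP) ^+ k)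
  = k`!%:R * (pihomog mdeg k G).@[v].
Proof.
move=> le_G_k; rewrite pihomogE [X in _ * X]raddf_sum mulr_sumr /diffop_at.
rewrite [RHS]big_mkcond !big_seq; apply: eq_bigr => mu muG /=.
have mderiv_b i : (linform v - ((linform v).@[xi])%:MP)^`M(i) = (v i)%:MP.
  by rewrite mderivB mderivC subr0 mderiv_linform.
rewrite (mderivm_expr_eval0 _ _ mderiv_b) ?meval_sub_meval //; last first.
  by rewrite -ltnS (leq_trans (msize_mdeg_lt muG)).
by case: eqP => _; rewrite ?mulr0 // mevalZ mevalX mulrCA.
Qed.

End PartialDerivatives.

Arguments linform {R n} v.
Arguments diffop_at {R n} G xi q.

Section SeriesFunctional.
Variables (K : fieldType) (n : nat).
Hypothesis charK0 : [pchar K] =i pred0.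

Lemma natr_fact_neq0 m : m`!%:R != 0 :> K.
Proof. by move/pcharf0P: charK0 => ->; rewrite -lt0n fact_gt0. Qed.

Lemma natr_mfact_neq0 (a : 'X_{1..n}) : (mfact a)%:R != 0 :> K.
Proof.
by move/pcharf0P: charK0 => ->; rewrite -lt0n prodn_gt0 // => i; rewrite fact_gt0.
Qed.

Definition mffact (m mu : 'X_{1..n}) : nat := \prod_(i < n) m i ^_ mu i.

Lemma mfact_mffact m mu : (mu <= m)%MM -> mfact m = (mffact m mu * mfact (m - mu))%N.
Proof.
move=> /forallP le_mu_m; rewrite /mfact /mffact -big_split /=.
by apply: eq_bigr => i _; rewrite mnmBE ffact_fact.
Qed.

Lemma mffact_eq0 m mu : ~~ (mu <= m)%MM -> mffact m mu = 0%N.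
Proof.
rewrite negb_forall => /existsP[i lt_m_mu]; rewrite /mffact (bigD1 i) //=.
by rewrite ffact_small ?mul0n // ltnNge.
Qed.

Lemma functional_of_series_exp (G : {mpoly K[n]}) xi q :
  functional_of_series (polyser_mul G (exp_series xi)) q = diffop_at G xi q.
Proof.
rewrite /functional_of_series /diffop_at /polyser_mul.
under [RHS]eq_bigr => mu _.
  rewrite mderivmE raddf_sum mulr_sumr /=.
  under eq_bigr => m _ do rewrite mevalZ mevalX.
  over.
rewrite exchange_big /=; apply: eq_bigr => m _; rewrite !mulr_sumr.
apply: eq_bigr => mu _; rewrite -/(mffact m mu).
case: (boolP (mu <= m)%MM) => [le_mu_m|/mffact_eq0 ->].
  rewrite /exp_series (mfact_mffact _ _ le_mu_m) natrM.
  by field; exact: natr_mfact_neq0.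
by rewrite !(mulr0, mul0r).
Qed.

End SeriesFunctional.

Section OmegaDLX.
Variables (K : fieldType) (n d k : nat) (om : nat -> {mpoly K[n]}).
Hypothesis om_homog : forall j, (j <= k)%N -> om j \is j.-homog.

Lemma msize_omega_dlx : (msize (omega_dlx d k om) <= k.+1)%N.
Proof.
rewrite msizeE; apply/bigmax_leqP_seq => m; rewrite mcoeff_msupp => + _.
apply: contraR; rewrite -leqNgt => lt_k_m.
rewrite mcoeffZ raddf_sum big1 /= ?mulr0 // => j _.
rewrite mcoeffZ (dhomog_nemf_coeff (om_homog _ (ltn_ord j))) ?mulr0 //.
by rewrite neq_ltn (leq_trans _ lt_k_m) ?orbT // ltnS -ltnS.
Qed.

Lemma pihomog_omega_dlx :
  pihomog mdeg k (omega_dlx d k om) = (d`!%:R^-1 * (d - k)`!%:R) *: om k.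
Proof.
rewrite linearZ /= [pihomog _ _ _]raddf_sum big_ord_recr /= big1 ?add0r => [|j _].
  by rewrite linearZ /= pihomog_dE ?om_homog // scalerA.
rewrite linearZ /= (pihomog_ne0 (d := j)) ?scaler0 ?neq_ltn ?ltn_ord //.
exact/om_homog/ltnW.
Qed.

End OmegaDLX.

Lemma top_component_neq0 {K : fieldType} {n k : nat} {xi : 'I_n -> K}
    {omega : {mpoly K[n.+1]}} {om : nat -> {mpoly K[n]}} :
  omega = \sum_(j < k.+1) embedRS (om j) * lin_form xi ^+ (k - j) ->
  ~ (exists q : {mpoly K[n.+1]}, omega = q * lin_form xi) ->
  om k != 0.
Proof.
move=> -> ndvd_omega; apply/eqP => om_k0; apply: ndvd_omega.
exists (\sum_(j < k) embedRS (om j) * lin_form xi ^+ (k - j.+1)).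
rewrite big_ord_recr /= om_k0 /embedRS mmap0 mul0r addr0 mulr_suml.
by apply: eq_bigr => j _; rewrite -mulrA -exprSr subnSK.
Qed.

Theorem proposition4p16 (K : fieldType) (n : nat) (d k : nat)
  (omega : {mpoly K[n.+1]}) (xi : 'I_n -> K) (om : nat -> {mpoly K[n]}) :
  [pchar K] =i pred0 ->
  (k <= d)%N ->
  omega \is k.-homog ->
  (* omega = sum_{j=0}^k omega_j l^{k-j} with omega_j in K[x_1..x_n]_j *)
  (forall j, (j <= k)%N -> om j \is j.-homog) ->
  omega = \sum_(j < k.+1) embedRS (om j) * lin_form xi ^+ (k - j) ->
  (* l does not divide omega *)
  ~ (exists q : {mpoly K[n.+1]}, omega = q * lin_form xi) ->
  is_nil_index (I_xi d k om xi) xi k.+1.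
Proof.
move=> charK0 _ _ om_homog omegaE ndvd_omega.
have [v om_k_v] := mpoly_nonroot _ charK0 (top_component_neq0 omegaE ndvd_omega).
have size_G : (msize (omega_dlx d k om) <= k.+1)%N by exact: msize_omega_dlx.
split=> [a q | M nil_M].
  rewrite /star functional_of_series_exp //.
  by rewrite diffop_at_exprM_eval0 ?meval_sub_meval.
rewrite leqNgt; apply/negP => lt_M_k.
pose b := linform v - ((linform v).@[xi])%:MP.
have := nil_M (linform v) (b ^+ (k - M)).
rewrite /star -/b -exprD subnKC // functional_of_series_exp //.
rewrite /b diffop_at_linform_expr // pihomog_omega_dlx // mevalZ.
by apply/eqP; rewrite !mulf_neq0 ?invr_eq0 ?natr_fact_neq0.
Qed.
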